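(* Let $\{(x_n,y_n)\}_{n=1}^k\subset(\mathbb Q\cap(0,1))\times(\mathbb Q\cap(0,1))$ with $x_m\ne x_n$ for $m\ne n$ and $y_m\ge y_n$ whenever $x_m\ge x_n$. Then there exists a binary digit vector $\vec B$ such that $F_{\vec B}(x_n)=y_n$ for all $n=1,\dots,k$.
   Context: A binary digit vector of length (scale factor) $N\ge3$ is $\vec B=(b_0,\dots,b_{N-1})\in\{0,1\}^N$ with $2\le\|\vec B\|:=\sum_i b_i\le N-1$; its digit set is $D=\{i:b_i=1\}$. With $\phi_d(x)=(x+d)/N$ for $d\in D$, let $\mu_{\vec B}$ be the unique Borel probability measure with $\mu_{\vec B}=\frac{1}{\|\vec B\|}\sum_{d\in D}\mu_{\vec B}\circ\phi_d^{-1}$, supported on the attractor $C_{\vec B}\subset[0,1]$. The CDF is $F_{\vec B}(x)=\mu_{\vec B}([0,x])$, $x\in[0,1]$. The scale factor $N$ of $\vec B$ is not prescribed. *)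

From HB Require Import structures.
From mathcomp Require Import all_boot all_order all_algebra.
From mathcomp Require Import all_classical all_reals all_analysis.
Set Implicit Arguments. Unset Strict Implicit. Unset Printing Implicit Defensive.
Import Order.TTheory GRing.Theory Num.Theory.
Local Open Scope ring_scope.
Local Open Scope classical_set_scope.

Definition digit_weight (N : nat) (B : 'I_N -> bool) : nat :=
  (\sum_(i < N) (B i : nat))%N.

Definition is_binary_digit_vector (N : nat) (B : 'I_N -> bool) : bool :=
  (3 <= N)%N && (2 <= digit_weight B <= N - 1)%N.

Definition phi (R : realType) (N d : nat) (x : R) : R := (x + d%:R) / N%:R.

Definition self_similar (R : realType) (N : nat) (B : 'I_N -> bool)
  (mu : probability R R) : Prop :=
  forall A : set R, measurable A ->
    (mu A = (((digit_weight B)%:R : R)^-1)%:E *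
           \sum_(d < N | B d) mu (@phi R N d @^-1` A))%E.

Definition cdfB (R : realType) (mu : probability R R) (x : R) : \bar R :=
  mu `[0, x].

(* Write x_n = p_n/Q and y_n = q_n/Q over a common denominator Q >= 2 and take
   N = Q^2.  If mu is self-similar, g(t) = mu(]-oo,t]) satisfies
   g(t) = ||B||^-1 sum_{d in D} g(N t - d); a nondecreasing solution with limits 0
   and 1 at -oo and +oo must vanish on ]-oo,0] and equal 1 on [1,+oo[, hence
   F_B(a/N) = #{d in D | d < a} / ||B||.  Choosing a nondecreasing staircase h with
   h(0) = 0, h(Q) = Q, h(p_n) = q_n and putting h(j+1) - h(j) digits in the j-th block
   of Q positions gives ||B|| = Q and F_B(x_n) = h(p_n)/Q = y_n.  A self-similar
   measure exists: iterating the averaging operator from the unit step gives a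
   decreasing sequence of distribution functions whose infimum is a right-continuous
   fixed point, and its Lebesgue-Stieltjes measure is self-similar because both sides
   of the equation agree on half-open intervals. *)

From HB Require Import structures.
From mathcomp Require Import all_boot all_order all_algebra.
From mathcomp Require Import all_classical all_reals all_analysis.
From mathcomp Require Import lra zify.
Import Order.TTheory GRing.Theory Num.Theory numFieldNormedType.Exports.
Local Open Scope ring_scope.
Local Open Scope classical_set_scope.

Section lower_envelope.
Context {R : realType} (f : nat -> R -> R).

Definition lower_envelope (t : R) : R := inf (range (f ^~ t)).

Hypothesis f_lb : forall t, has_lbound (range (f ^~ t)).

Lemma lower_envelope_le n t : lower_envelope t <= f n t.
Proof. by apply: ge_inf => //; exists n. Qed.

Lemma lower_envelope_ge c t : (forall n, c <= f n t) -> c <= lower_envelope t.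
Proof.
move=> cf; apply: lb_le_inf; first by exists (f 0 t), 0%N.
by move=> _ [n _ <-].
Qed.

Lemma lower_envelope_adherent t e :
  0 < e -> exists n, f n t < lower_envelope t + e.
Proof.
move=> e0; have ft_inf : has_inf (range (f ^~ t)).
  by split; [exists (f 0 t), 0%N | exact: f_lb].
by have [_ [n _ <-] fn_lt] := inf_adherent e0 ft_inf; exists n.
Qed.

Hypothesis f_nd : forall n, nondecreasing (f n).

Lemma nondecreasing_lower_envelope : nondecreasing lower_envelope.
Proof.
move=> s t st; apply: lower_envelope_ge => n.
exact: le_trans (lower_envelope_le n s) (f_nd n _ _ st).
Qed.

Lemma right_continuous_lower_envelope :
  (forall n, right_continuous (f n)) -> right_continuous lower_envelope.
Proof.
move=> f_rc t; apply/cvgrPdist_lt => e e0.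
have [n fn_lt] := lower_envelope_adherent t (e / 2) (divr_gt0 e0 (ltr0n R 2)).
have fn_near := cvgr_lt _ (f_rc n t) _ fn_lt; near=> s.
have ts : t <= s by near: s; exact: nbhs_right_ge.
have fns : f n s < lower_envelope t + e / 2 by near: s; exact: fn_near.
have envs := lower_envelope_le n s.
have envts := nondecreasing_lower_envelope _ _ ts.
rewrite ler0_norm ?subr_le0 //; lra.
Unshelve. all: by end_near.
Qed.

End lower_envelope.

Lemma natr_expr_cvgy {R : realType} (N : nat) (c t : R) :
  (1 < N)%N -> 0 < t -> c + N%:R ^+ k * t @[k --> \oo] --> +oo.
Proof.
move=> N1 t0; apply/cvgryPge => A; near=> k.
have k_le : k%:R <= N%:R ^+ k :> R by rewrite -natrX ler_nat ltnW // ltn_expl.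
have Ak : (A - c) / t <= k%:R by near: k; exact: nbhs_infty_ger.
have : (A - c) / t * t = A - c by rewrite divfK ?gt_eqF.
nra.
Unshelve. all: by end_near.
Qed.

Lemma natr_expr_cvgNy {R : realType} {N : nat} {t : R} :
  (1 < N)%N -> t < 0 -> N%:R ^+ k * t @[k --> \oo] --> -oo.
Proof.
move=> N1 t0; apply/cvgNry.
have -> : - (fun k => N%:R ^+ k * t) = fun k => 0 + N%:R ^+ k * - t.
  by apply/funext => k; rewrite add0r mulrN.
by apply: natr_expr_cvgy; rewrite // oppr_gt0.
Qed.

Definition is_cdf01 {R : realType} (g : R -> R) : Prop :=
  [/\ nondecreasing g, right_continuous g,
      forall t, t < 0 -> g t = 0 & forall t, 1 <= t -> g t = 1].

Lemma is_cdf01_bounds {R : realType} {g : R -> R} :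
  is_cdf01 g -> forall t, 0 <= g t <= 1.
Proof.
case=> g_nd _ g_neg g_one t; apply/andP; split.
  have m_neg : Num.min t (-1) < 0 by rewrite gt_min ltrN10 orbT.
  by rewrite -(g_neg _ m_neg) g_nd // ge_min lexx.
have M_ge1 : 1 <= Num.max t 1 by rewrite le_max lexx orbT.
by rewrite -(g_one _ M_ge1) g_nd // le_max lexx.
Qed.

Definition unit_step {R : realType} (t : R) : R := if 0 <= t then 1 else 0.

Lemma is_cdf01_unit_step {R : realType} : is_cdf01 (@unit_step R).
Proof.
rewrite /unit_step; split=> [s t st | t | t t0 | t t1].
- have [s0|_] := leP 0 s; first by rewrite (le_trans s0 st).
  by case: ifP.
- have [t0|t0] := leP 0 t; apply: cvg_near_cst; near=> s.
    by rewrite (le_trans t0) //; near: s; exact: nbhs_right_ge.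
  by rewrite ifF // leNgt; apply/negbF; near: s; exact: nbhs_right_lt.
- by rewrite leNgt t0.
- by rewrite (le_trans ler01 t1).
Unshelve. all: by end_near.
Qed.

Section digit_average.
Context {R : realType} {N : nat} (B : 'I_N -> bool).
Local Notation W := (digit_weight B).
Implicit Types (g h : R -> R) (c s t : R).

Lemma digit_weightE : W = (\sum_(d < N | B d) 1)%N.
Proof. by rewrite /digit_weight [RHS]big_mkcond; apply: eq_bigr => d _; case: (B d). Qed.

Lemma digit_weight_le : (W <= N)%N.
Proof.
rewrite -[leqRHS]card_ord -sum1_card /digit_weight.
by apply: leq_sum => d _; case: (B d).
Qed.

(* The self-similarity equation read on distribution functions, since
   [phi N d @^-1` `]-oo, t] = `]-oo, N t - d]]. *)
Definition digit_average (g : R -> R) (t : R) : R :=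
  W%:R^-1 * \sum_(d < N | B d) g (N%:R * t - d%:R).

Lemma ler_digit_average g h s t :
    (forall d : 'I_N, B d -> g (N%:R * s - d%:R) <= h (N%:R * t - d%:R)) ->
  digit_average g s <= digit_average h t.
Proof. by move=> gh; rewrite ler_wpM2l ?invr_ge0 ?ler0n //; exact: ler_sum. Qed.

Lemma eq_digit_average g h t :
    (forall d : 'I_N, B d -> g (N%:R * t - d%:R) = h (N%:R * t - d%:R)) ->
  digit_average g t = digit_average h t.
Proof. by move=> gh; congr (_ * _); exact: eq_bigr. Qed.

Lemma nondecreasing_digit_average g :
  nondecreasing g -> nondecreasing (digit_average g).
Proof.
move=> g_nd s t st; apply: ler_digit_average => d _; apply: g_nd.
by rewrite lerD2r ler_wpM2l.
Qed.

Lemma digit_average_le_single h t (o : 'I_N) :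
    (forall d, d != o -> h (N%:R * t - d%:R) = 0) -> 0 <= h (N%:R * t - o%:R) ->
  digit_average h t <= W%:R^-1 * h (N%:R * t - o%:R).
Proof.
move=> h_other h_o; rewrite ler_wpM2l ?invr_ge0 ?ler0n // big_mkcond (bigD1 o) //=.
rewrite big1 ?addr0 => [|d /h_other ->]; last by case: (B d).
by case: (B o).
Qed.

Hypothesis W_gt0 : (0 < W)%N.

Lemma digit_scale_gt0 : (0 < N)%N.
Proof. exact: leq_trans W_gt0 digit_weight_le. Qed.

Lemma digit_average_cst c t : digit_average (fun=> c) t = c.
Proof.
have W0 : W%:R != 0 :> R by rewrite pnatr_eq0 -lt0n.
rewrite /digit_average -[c]mul1r -mulr_suml mulrA.
by rewrite [\sum_(_ < _ | _) _](_ : _ = W%:R) ?mulVf ?mul1r // digit_weightE natr_sum.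
Qed.

Lemma digit_averageDr g c t :
  digit_average (fun u => g u + c) t = digit_average g t + c.
Proof. by rewrite -[in RHS](digit_average_cst c t) /digit_average -mulrDr big_split. Qed.

Lemma digit_averageBl c g t :
  digit_average (fun u => c - g u) t = c - digit_average g t.
Proof.
rewrite -[in RHS](digit_average_cst c t) /digit_average -mulrBr.
by rewrite big_split /= sumrN.
Qed.

Lemma right_continuous_digit_average g :
  right_continuous g -> right_continuous (digit_average g).
Proof.
move=> g_rc t; apply: cvgMl_tmp; apply: (@cvg_big _ _ +%R 0 _ add_continuous) => d _.
pose aff s : R := N%:R * s - d%:R.
apply: (@increasing_cvg_at_right_comp _ aff g t +oo%O) => //.
- by move=> u v _ _ uv; rewrite ltrD2r ltr_pM2l // ltr0n digit_scale_gt0.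
- apply: cvg_at_right_filter; apply: cvgB; last exact: cvg_cst.
  by apply: cvgMl_tmp; exact: cvg_id.
Qed.

Lemma is_cdf01_digit_average g : is_cdf01 g -> is_cdf01 (digit_average g).
Proof.
move=> g01; have [g_nd g_rc g_neg g_one] := g01; split.
- exact: nondecreasing_digit_average.
- exact: right_continuous_digit_average.
- move=> t t0; rewrite -(digit_average_cst 0 t); apply: eq_digit_average => d _.
  rewrite g_neg //; have : N%:R * t < 0 by rewrite pmulr_rlt0 // ltr0n digit_scale_gt0.
  by have := ler0n R d; lra.
- move=> t t1; rewrite -(digit_average_cst 1 t); apply: eq_digit_average => d _.
  rewrite g_one //; have : (d.+1 <= N)%N by [].
  rewrite -(ler_nat R) -addn1 natrD => dN.
  have : N%:R * 1 <= N%:R * t :> R by rewrite ler_wpM2l.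
  lra.
Qed.

End digit_average.

Section digit_cdf.
Context {R : realType} {N : nat} (B : 'I_N -> bool).
Hypothesis W_gt0 : (0 < digit_weight B)%N.

Definition digit_iter (n : nat) : R -> R := iter n (digit_average B) unit_step.

Definition digit_cdf : R -> R := lower_envelope digit_iter.

Lemma is_cdf01_digit_iter n : is_cdf01 (digit_iter n).
Proof.
elim: n => [|n IH]; first exact: is_cdf01_unit_step.
exact: is_cdf01_digit_average.
Qed.

Lemma digit_iter_nonincreasing t : nonincreasing_seq (digit_iter ^~ t).
Proof.
apply/nonincreasing_seqP => n; elim: n t => [|n IH] t /=; last first.
  by apply: ler_digit_average => d _; exact: IH.
have [_ _ neg _] := is_cdf01_digit_iter 1.
rewrite /unit_step; case: ifPn => t0; last by rewrite [_ _ t]neg // ltNge.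
by case/andP: (is_cdf01_bounds (is_cdf01_digit_iter 1) t).
Qed.

Let digit_iter_lb t : has_lbound (range (digit_iter ^~ t)).
Proof.
exists 0 => _ [n _ <-].
by case/andP: (is_cdf01_bounds (is_cdf01_digit_iter n) t).
Qed.

Lemma digit_cdf_fix t : digit_average B digit_cdf t = digit_cdf t.
Proof.
apply/eqP; rewrite eq_le; apply/andP; split.
  apply: lower_envelope_ge => n.
  apply: le_trans (digit_iter_nonincreasing t n n.+1 (leqnSn n)).
  by apply: ler_digit_average => d _; exact: lower_envelope_le.
apply/ler_addgt0Pr => e e0.
have : \forall n \near \oo, forall d : 'I_N,
    digit_iter n (N%:R * t - d%:R) <= digit_cdf (N%:R * t - d%:R) + e.
  apply: filter_forall => d.
  have [m fm_lt] := lower_envelope_adherent _ digit_iter_lb (N%:R * t - d%:R) e e0.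
  near=> n; apply: le_trans (ltW fm_lt).
  by apply: digit_iter_nonincreasing; near: n; exact: nbhs_infty_ge.
move=> /filter_ex[n digits_close].
apply: le_trans (lower_envelope_le _ digit_iter_lb n.+1 t) _.
by rewrite -digit_averageDr //; apply: ler_digit_average => d _; exact: digits_close.
Unshelve. all: by end_near.
Qed.

Lemma is_cdf01_digit_cdf : is_cdf01 digit_cdf.
Proof.
have iter01 := is_cdf01_digit_iter.
split.
- by apply: nondecreasing_lower_envelope => // n; case: (iter01 n).
- by apply: right_continuous_lower_envelope => // n; case: (iter01 n).
- move=> t t0; apply/eqP; rewrite eq_le; apply/andP; split.
    have [_ _ iter0_neg _] := iter01 0.
    by rewrite -(iter0_neg t t0); exact: lower_envelope_le.
  by apply: lower_envelope_ge => n; case/andP: (is_cdf01_bounds (iter01 n) t).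
- move=> t t1; apply/eqP; rewrite eq_le; apply/andP; split.
    case/andP: (is_cdf01_bounds (iter01 0) t) => _; apply: le_trans.
    exact: lower_envelope_le.
  by apply: lower_envelope_ge => n; have [_ _ _ ->] := iter01 n.
Qed.

End digit_cdf.

Section digit_average_fixpoint.
Context {R : realType} {N : nat} {B : 'I_N -> bool} {g : R -> R}.
Local Notation W := (digit_weight B).
Hypothesis W_ge2 : (2 <= W)%N.
Hypothesis g_fix : forall t, digit_average B g t = g t.
Hypothesis g_nd : nondecreasing g.
Hypothesis g_Ny : g @ -oo --> (0 : R).
Hypothesis g_y : g @ +oo --> (1 : R).

Let W_gt0 : (0 < W)%N. Proof. exact: ltnW. Qed.
Let N_gt1 : (1 < N)%N. Proof. exact: leq_trans W_ge2 (digit_weight_le B). Qed.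
Let N_gt0 : (0 < N)%N. Proof. exact: ltnW. Qed.

Lemma digit_fixpoint_ge0 t : 0 <= g t.
Proof.
rewrite leNgt; apply/negP => gt_neg.
have : \forall s \near -oo, s <= t /\ g t < g s.
  near=> s; split; near: s; first by apply: nbhs_ninfty_le; exact: num_real.
  exact: cvgr_gt _ g_Ny _ gt_neg.
by move=> /filter_ex[s [st]]; rewrite ltNge g_nd.
Unshelve. all: by end_near.
Qed.

Lemma digit_fixpoint_le1 t : g t <= 1.
Proof.
rewrite leNgt; apply/negP => gt_1.
have : \forall s \near +oo, t <= s /\ g s < g t.
  near=> s; split; near: s; first by apply: nbhs_pinfty_ge; exact: num_real.
  exact: cvgr_lt _ g_y _ gt_1.
by move=> /filter_ex[s [ts]]; rewrite ltNge g_nd.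
Unshelve. all: by end_near.
Qed.

Lemma digit_fixpoint_lt0 t : t < 0 -> g t = 0.
Proof.
move=> t0; apply/eqP; rewrite eq_le digit_fixpoint_ge0 andbT.
(* All the points [N t - d] lie below [N t], so [g t <= g (N t)]: iterate towards [-oo]. *)
have g_iter k : g t <= g (N%:R ^+ k * t).
  elim: k => [|k IH]; first by rewrite expr0 mul1r.
  apply: le_trans IH _; rewrite -[leLHS]g_fix -(digit_average_cst B W_gt0 (g _) t).
  apply: ler_digit_average => d _; rewrite exprS -mulrA g_nd // lerBlDr lerDl.
  by rewrite ler0n.
have g_pow := cvg_comp _ _ (natr_expr_cvgNy N_gt1 t0) g_Ny.
by rewrite -(cvg_lim _ g_pow) //; apply: limr_ge; [exact: cvgP g_pow | exact: nearW].
Qed.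

Lemma digit_fixpoint_gt1 t : 1 < t -> g t = 1.
Proof.
move=> t1; apply/eqP; rewrite eq_le digit_fixpoint_le1 /=.
have g_iter k : g (1 + N%:R ^+ k * (t - 1)) <= g t.
  elim: k => [|k IH]; first by rewrite expr0 mul1r addrC subrK.
  apply: le_trans IH; set u := 1 + _ * (t - 1).
  rewrite -[leRHS]g_fix -(digit_average_cst B W_gt0 (g (1 + N%:R ^+ k.+1 * (t - 1))) u).
  apply: ler_digit_average => d _; apply: g_nd.
  rewrite exprS -mulrA [N%:R * (1 + _)]mulrDr mulr1.
  have : (d.+1 <= N)%N by [].
  by rewrite -(ler_nat R) -addn1 natrD; lra.
have s_gt0 : 0 < t - 1 by rewrite subr_gt0.
have g_pow := cvg_comp _ _ (natr_expr_cvgy N 1 _ N_gt1 s_gt0) g_y.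
by rewrite -(cvg_lim _ g_pow) //; apply: limr_le; [exact: cvgP g_pow | exact: nearW].
Qed.

Let eq0_le_weight_fraction (x : R) : 0 <= x -> x <= W%:R^-1 * x -> x = 0.
Proof.
move=> x0; rewrite ler_pdivlMl ?ltr0n // => Wx.
have : 2%:R <= W%:R :> R by rewrite ler_nat.
move=> W2; apply/eqP; rewrite eq_le x0 andbT; nra.
Qed.

Lemma digit_fixpoint0 : g 0 = 0.
Proof.
(* At [0] only the digit [0] contributes to the average, hence [g 0 <= g 0 / W]. *)
apply: eq0_le_weight_fraction; first exact: digit_fixpoint_ge0.
rewrite -[leLHS]g_fix.
have -> : g 0 = g (N%:R * 0 - (Ordinal N_gt0)%:R) by rewrite mulr0 subr0.
apply: digit_average_le_single => // [d d0|]; last exact: digit_fixpoint_ge0.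
rewrite mulr0 sub0r digit_fixpoint_lt0 // oppr_lt0 ltr0n lt0n.
by apply: contra d0 => /eqP d0; apply/eqP/val_inj.
Qed.

Lemma digit_fixpoint1 : g 1 = 1.
Proof.
(* Dually, only the digit [N - 1] contributes to the average of [1 - g] at [1]. *)
apply/eqP; rewrite eq_sym -subr_eq0; apply/eqP/eq0_le_weight_fraction.
  by rewrite subr_ge0 digit_fixpoint_le1.
have N1_lt : (N.-1 < N)%N by rewrite prednK.
have N_pred : N%:R = (N.-1)%:R + 1 :> R by rewrite natr1 prednK.
rewrite -[in leLHS]g_fix -digit_averageBl //.
have -> : 1 - g 1 = 1 - g (N%:R * 1 - (Ordinal N1_lt)%:R).
  by rewrite mulr1 N_pred addrAC subrr add0r.
apply: (digit_average_le_single B (fun u => 1 - g u) 1 (Ordinal N1_lt)) => // [d d_ne|];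
  last by rewrite subr_ge0 digit_fixpoint_le1.
apply/eqP; rewrite subr_eq0 eq_sym; apply/eqP/digit_fixpoint_gt1.
have : (d < N.-1)%N.
  rewrite ltn_neqAle -ltnS prednK // ltn_ord andbT.
  by apply: contra d_ne => /eqP dN; apply/eqP/val_inj.
by rewrite -(ltr_nat R) mulr1 N_pred => dN; lra.
Qed.

Lemma digit_fixpoint_le0 t : t <= 0 -> g t = 0.
Proof.
by rewrite le_eqVlt => /predU1P[->|]; [exact: digit_fixpoint0 | exact: digit_fixpoint_lt0].
Qed.

Lemma digit_fixpoint_ge1 t : 1 <= t -> g t = 1.
Proof.
by rewrite le_eqVlt => /predU1P[<-|]; [exact: digit_fixpoint1 | exact: digit_fixpoint_gt1].
Qed.

Lemma digit_fixpoint_grid (a : nat) :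
  g (a%:R / N%:R) = (\sum_(d < N | (d < a)%N) B d)%:R / W%:R.
Proof.
rewrite -g_fix /digit_average mulrC mulrCA divff ?pnatr_eq0 -?lt0n // mulr1.
congr (_ * _); rewrite natr_sum big_mkcond [RHS]big_mkcond /=.
apply: eq_bigr => d _; case: (B d); last by case: ltnP.
case: ltnP => [da|ad].
  rewrite digit_fixpoint_ge1 //; move: da; rewrite -(ler_nat R) -addn1 natrD; lra.
by rewrite digit_fixpoint_le0 // subr_le0 ler_nat.
Qed.

End digit_average_fixpoint.

Section phi.
Context {R : realType} (N d : nat).
Hypothesis N_gt0 : (0 < N)%N.

Lemma measurable_phi :
  measurable_fun setT (phi N d : measurableTypeR R -> measurableTypeR R).
Proof.
apply: (@measurable_realfun.measurable_funM _ (measurableTypeR R) R setT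
  (fun x => x + d%:R) (fun _ => N%:R^-1)) => //.
exact: (@measurable_realfun.measurable_funD _ (measurableTypeR R) R setT id
  (fun _ => d%:R)).
Qed.

Let N_pos : 0 < N%:R :> R. Proof. by rewrite ltr0n. Qed.

Lemma phi_le (x c : R) : (phi N d x <= c) = (x <= N%:R * c - d%:R).
Proof. by rewrite /phi ler_pdivrMr // lerBrDr mulrC. Qed.

Lemma phi_gt (x c : R) : (c < phi N d x) = (N%:R * c - d%:R < x).
Proof. by rewrite /phi ltr_pdivlMr // ltrBlDr mulrC. Qed.

Lemma preimage_phi_itvNy (c : R) :
  phi N d @^-1` `]-oo, c] = `]-oo, N%:R * c - d%:R].
Proof. by apply/seteqP; split => x /=; rewrite !in_itv /= phi_le. Qed.

Lemma preimage_phi_itv_oc (a c : R) :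
  phi N d @^-1` `]a, c] = `]N%:R * a - d%:R, N%:R * c - d%:R].
Proof. by apply/seteqP; split => x /=; rewrite !in_itv /= phi_le phi_gt. Qed.

End phi.

Section digit_image.
Context {R : realType} {N : nat} (B : 'I_N -> bool).
Context (mu : {measure set (measurableTypeR R) -> \bar R}).

Local Open Scope ereal_scope.

Definition digit_image (A : set (measurableTypeR R)) : \bar R :=
  ((digit_weight B)%:R^-1)%:E * \sum_(d < N | B d) mu (phi N d @^-1` A).

Let digit_image0 : digit_image set0 = 0.
Proof. by rewrite /digit_image big1 ?mule0 // => d _; rewrite preimage_set0 measure0. Qed.

Let digit_image_ge0 A : 0 <= digit_image A.
Proof. by rewrite mule_ge0 ?lee_fin ?invr_ge0 ?ler0n // sume_ge0. Qed.

Let digit_image_sigma_additive : semi_sigma_additive digit_image.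
Proof.
move=> F mF tF mUF; rewrite /digit_image.
set c := ((digit_weight B)%:R^-1)%:E.
have -> : (fun n => \sum_(0 <= i < n) (c * \sum_(d < N | B d) mu (phi N d @^-1` F i))) =
    (fun n => c * \sum_(d < N | B d) \sum_(0 <= i < n) mu (phi N d @^-1` F i)).
  apply/funext => n; rewrite -ge0_sume_distrr => [|i _]; last exact: sume_ge0.
  congr (_ * _); exact: exchange_big.
apply: cvgeZl; first by [].
refine (cvg_nnesum (f := fun (d : 'I_N) n => \sum_(0 <= i < n) mu (phi N d @^-1` F i))
  (l := fun d : 'I_N => mu (phi N d @^-1` \bigcup_n F n)) (P := B) _ _).
  by move=> d _; near=> n; exact: sume_ge0.
move=> d _.
have mphi i : measurable (phi N d @^-1` F i).
  by rewrite -[X in measurable X]setTI; exact: measurable_phi.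
rewrite preimage_bigcup; apply: measure_semi_sigma_additive => //.
- apply/trivIsetP => i j _ _ ij; rewrite -preimage_setI.
  by move/trivIsetP : tF => /(_ _ _ _ _ ij) ->//; rewrite preimage_set0.
- by rewrite -preimage_bigcup -[X in measurable X]setTI; exact: measurable_phi.
Unshelve. all: by end_near.
Qed.

HB.instance Definition _ := isMeasure.Build _ _ _ digit_image
  digit_image0 digit_image_ge0 digit_image_sigma_additive.

End digit_image.

Section digit_measure.
Context {R : realType} {N : nat} (B : 'I_N -> bool).
Hypothesis W_gt0 : (0 < digit_weight B)%N.

Let N_gt0 : (0 < N)%N. Proof. exact: digit_scale_gt0 W_gt0. Qed.
Local Notation F := (@digit_cdf R N B).
Let F01 : is_cdf01 F. Proof. exact: is_cdf01_digit_cdf. Qed.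

Let F_nd : nondecreasing F. Proof. by case: F01. Qed.
Let F_rc : right_continuous F. Proof. by case: F01. Qed.
HB.instance Definition _ := isCumulative.Build R _ R F F_nd F_rc.

Let F_Ny : F @ -oo --> (0 : R).
Proof.
have [_ _ F_neg _] := F01; apply: cvg_near_cst; near=> t; apply: F_neg.
by near: t; apply: nbhs_ninfty_lt; exact: num_real.
Unshelve. all: by end_near.
Qed.

Let F_y : F @ +oo --> (1 : R).
Proof.
have [_ _ _ F_one] := F01; apply: cvg_near_cst; near=> t; apply: F_one.
by near: t; apply: nbhs_pinfty_ge; exact: num_real.
Unshelve. all: by end_near.
Qed.

HB.instance Definition _ := isCumulativeBounded.Build R 0 1 F F_Ny F_y.

Local Notation LS := (lebesgue_stieltjes_measure F).

Let LS_itv_oc a c : a <= c -> LS `]a, c] = (F c - F a)%:E.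
Proof.
move=> ac; rewrite /lebesgue_stieltjes_measure /measure_extension /=.
by rewrite measurable_mu_extE /= ?wlength_itv_bnd ?EFinB //; exact: is_ocitv.
Qed.

Let LS_digit_image A : measurable A -> LS A = digit_image B LS A.
Proof.
apply: lebesgue_stieltjes_measure_unique => _ [[a c] _ <-] /=.
have [ac|ca] := leP a c; last first.
  by rewrite set_itv_ge ?measure0 // bnd_simp -leNgt ltW.
rewrite LS_itv_oc // /digit_image /=.
have Nac (d : nat) : N%:R * a - d%:R <= N%:R * c - d%:R by rewrite lerD2r ler_wpM2l.
under eq_bigr => d _ do rewrite preimage_phi_itv_oc // LS_itv_oc ?Nac //.
rewrite sumEFin -EFinM.
rewrite -[in LHS](digit_cdf_fix B W_gt0 c) -[in LHS](digit_cdf_fix B W_gt0 a).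
by rewrite /digit_average -mulrBr -sumrB.
Qed.

(* [LS] is a measure on [measurableTypeR R], while [probability R R] refers to the
   measurable structure declared on [R] itself (the same Borel sets). *)
Definition digit_measure : set R -> \bar R := lebesgue_stieltjes_measure F.

HB.instance Definition _ := @isMeasure.Build _ R R digit_measure
  (measure0 LS) (measure_ge0 LS) (@measure_semi_sigma_additive _ _ _ LS).
HB.instance Definition _ :=
  @Measure_isProbability.Build _ R R digit_measure (probability_setT LS).

Lemma self_similar_digit_measure : self_similar B digit_measure.
Proof. by move=> A mA; exact: LS_digit_image. Qed.

End digit_measure.

Section self_similar_probability.
Context {R : realType} {N : nat} {B : 'I_N -> bool} {mu : probability R R}.
Hypothesis W_ge2 : (2 <= digit_weight B)%N.
Hypothesis mu_ss : self_similar B mu.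

(* Seeing [idfun] as a random variable on [mu] gives the limits of its [cdf]. *)
#[local] HB.instance Definition _ :=
  @isMeasurableFun.Build _ _ R R idfun (@measurable_id _ R setT).

Let g (t : R) : R := fine (mu `]-oo, t]).

Let gE t : mu `]-oo, t] = (g t)%:E.
Proof. by rewrite fineK ?fin_num_measure. Qed.

Let cdf_idE t : cdf (idfun : {RV mu >-> R}) t = mu `]-oo, t].
Proof. by rewrite /cdf /distribution /pushforward preimage_id. Qed.

Let N_gt0 : (0 < N)%N.
Proof. exact: digit_scale_gt0 (ltnW W_ge2). Qed.

Let g_fix t : digit_average B g t = g t.
Proof.
have := @mu_ss `]-oo, t] (measurable_itv _).
under eq_bigr => d _ do rewrite preimage_phi_itvNy // gE.
by rewrite gE sumEFin -EFinM => -[->].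
Qed.

Let g_nd : nondecreasing g.
Proof. by move=> s t st; rewrite -lee_fin -!gE -!cdf_idE cdf_nondecreasing. Qed.

Let g_cdf : g = fine \o cdf (idfun : {RV mu >-> R}).
Proof. by apply/funext => t /=; rewrite cdf_idE. Qed.

Let g_Ny : g @ -oo --> (0 : R).
Proof. by rewrite g_cdf; apply/fine_cvg/cvg_cdfNy0. Qed.

Let g_y : g @ +oo --> (1 : R).
Proof. by rewrite g_cdf; apply/fine_cvg/cvg_cdfy1. Qed.

Lemma self_similar_cdf_grid (a : nat) :
  cdfB mu (a%:R / N%:R) =
    ((\sum_(d < N | (d < a)%N) B d)%:R / (digit_weight B)%:R)%:E.
Proof.
have x_ge0 : 0 <= a%:R / N%:R :> R by rewrite divr_ge0 ?ler0n.
have split_itv : `]-oo, a%:R / N%:R] = `]-oo, 0[ `|` `[0, a%:R / N%:R] :> set R.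
  by rewrite -itv_bndbnd_setU // bnd_simp.
have disj : `]-oo, 0[ `&` `[0, a%:R / N%:R] = set0 :> set R.
  by apply/seteqP; split => t //=; rewrite !in_itv /= => -[t0 /andP[]]; rewrite leNgt t0.
have neg0 : mu `]-oo, 0[ = 0%E.
  apply/eqP; rewrite eq_le measure_ge0 andbT.
  apply: (@le_trans _ _ (mu `]-oo, 0])).
    by apply: le_measure; rewrite ?inE //; apply: subitvPr; rewrite bnd_simp.
  by rewrite gE (digit_fixpoint0 W_ge2 g_fix g_nd g_Ny).
rewrite /cdfB -(digit_fixpoint_grid W_ge2 g_fix g_nd g_Ny g_y) -gE split_itv.
by rewrite measureU // -[LHS]add0e; congr (_ + _); exact/esym.
Qed.

End self_similar_probability.

Lemma sum_ord_ltn (Q c : nat) : (c <= Q)%N -> (\sum_(i < Q) (i < c))%N = c.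
Proof.
move=> cQ; rewrite -(big_mkcond (fun i : 'I_Q => (i < c)%N) (fun=> 1%N)) /=.
by rewrite -(big_ord_widen Q (fun=> 1%N) cQ) sum_nat_const card_ord muln1.
Qed.

Section staircase_digits.
Variable Q : nat.

Definition staircase_digits (h : nat -> nat) (d : nat) : bool :=
  (d %% Q < h (d %/ Q).+1 - h (d %/ Q))%N.

Lemma sum_staircase_digits (h : nat -> nat) (j : nat) :
    h 0 = 0%N -> (forall i, h i <= h i.+1 <= h i + Q)%N ->
  (\sum_(d < j * Q) staircase_digits h d)%N = h j.
Proof.
move=> h0 h_step; elim: j => [|j IH]; first by rewrite mul0n big_ord0 h0.
have [h_le h_le_Q] := andP (h_step j).
have block : (\sum_(i < Q) staircase_digits h (j * Q + i))%N =
    (\sum_(i < Q) (i < h j.+1 - h j))%N.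
  apply: eq_bigr => i _; have iQ := ltn_ord i; have Q_gt0 := leq_ltn_trans (leq0n i) iQ.
  rewrite /staircase_digits divnDl ?dvdn_mull // mulnK // divn_small // addn0.
  by rewrite modnMDl modn_small.
rewrite mulSn addnC big_split_ord /= IH block sum_ord_ltn ?leq_subLR //.
exact: subnKC.
Qed.

End staircase_digits.

Lemma exists_staircase {k Q : nat} {p q : 'I_k -> nat} :
    (forall n, 0 < p n < Q)%N -> (forall n, q n <= Q)%N ->
    (forall m n, p m <= p n -> q m <= q n)%N ->
  exists h : nat -> nat, [/\ h 0 = 0%N, h Q = Q,
    forall i, (h i <= h i.+1 <= h i + Q)%N & forall n, h (p n) = q n].
Proof.
move=> hp hq hmono.
pose h j := if (j < Q)%N then (\max_(n | p n <= j) q n)%N else Q.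
have h_le j : (h j <= Q)%N.
  by rewrite /h; case: ifP => // _; apply/bigmax_leqP => n _.
have h_nd i j : (i <= j)%N -> (h i <= h j)%N.
  move=> ij; rewrite /h; case: ifP => iQ; case: ifP => jQ //.
  - apply/bigmax_leqP => n pn; apply: leq_bigmax_cond; exact: leq_trans pn ij.
  - by apply/bigmax_leqP => n _.
  - by move: iQ; rewrite (leq_ltn_trans ij jQ).
exists h; split.
- rewrite /h /=; case: ifP => [_|]; last by move/negbT; rewrite lt0n negbK => /eqP.
  by apply/eqP; rewrite -leqn0; apply/bigmax_leqP => n; have := hp n; lia.
- by rewrite /h /= ltnn.
- move=> i; rewrite h_nd //=; have := h_le i.+1; lia.
- move=> n; rewrite /h /= ifT; last by have := hp n; lia.
  apply/eqP; rewrite eqn_leq; apply/andP; split; last exact: leq_bigmax_cond.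
  by apply/bigmax_leqP => m; apply: hmono.
Qed.

Lemma exists_digit_vector_with_counts {k Q : nat} {p q : 'I_k -> nat} :
    (forall n, 0 < p n < Q)%N -> (forall n, q n <= Q)%N ->
    (forall m n, p m <= p n -> q m <= q n)%N ->
  exists B : 'I_(Q * Q) -> bool, digit_weight B = Q /\
    forall n, (\sum_(d < Q * Q | (d < p n * Q)%N) B d)%N = q n.
Proof.
move=> hp hq hmono; have [h [h0 hQ h_step h_pq]] := exists_staircase hp hq hmono.
exists (fun d : 'I_(Q * Q) => staircase_digits Q h d); split.
  by rewrite /digit_weight sum_staircase_digits.
move=> n; have pnQ : (p n * Q <= Q * Q)%N by rewrite leq_mul2r; have := hp n; lia.
rewrite -(big_ord_widen _ (fun d => staircase_digits Q h d : nat) pnQ).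
by rewrite sum_staircase_digits.
Qed.

Lemma exists_common_denominator {I : finType} (r : I -> rat) :
  exists2 Q : nat, (2 <= Q)%N & forall i, (`|denq (r i)| %| Q)%N.
Proof.
exists (2 * \prod_i `|denq (r i)|)%N => [|i].
  rewrite -[leqLHS]muln1 leq_mul2l /=; apply: prodn_gt0 => i.
  by rewrite absz_gt0 denq_neq0.
by rewrite (bigD1 i) //= dvdn_mull // dvdn_mulr.
Qed.

Lemma rat_unit_itv_fraction {Q : nat} {r : rat} :
    (0 < Q)%N -> (`|denq r| %| Q)%N -> 0 < r < 1 ->
  exists2 p : nat, (0 < p < Q)%N & r = p%:R / Q%:R.
Proof.
move=> Q0 den_dvd /andP[r0 r1].
have [m Qm] := dvdnP den_dvd.
have n0 : 0 < numq r by rewrite numq_gt0.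
have Qr : 0 < Q%:R :> rat by rewrite ltr0n.
have rE : r = (`|numq r| * m)%N%:R / Q%:R.
  rewrite Qm !natrM !natr_absz !gtr0_norm ?denq_gt0 // -[in LHS](divq_num_den r).
  have m0 : m%:R != 0 :> rat.
    by move: Q0; rewrite Qm muln_gt0 pnatr_eq0 -lt0n => /andP[].
  by rewrite [m%:R * _]mulrC -mulf_div divff // mulr1.
exists (`|numq r| * m)%N => //.
have rQ : r * Q%:R = (`|numq r| * m)%N%:R by rewrite [in LHS]rE divfK ?gt_eqF.
rewrite -(ltr_nat rat) -(ltr_nat rat) -rQ; apply/andP; split; first exact: mulr_gt0.
by rewrite -[ltRHS]mul1r ltr_pM2r.
Qed.

Lemma rat_unit_itv_fractions {I : Type} {Q : nat} (r : I -> rat) :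
    (0 < Q)%N -> (forall i, `|denq (r i)| %| Q)%N -> (forall i, 0 < r i < 1) ->
  exists p : I -> nat, forall i, (0 < p i < Q)%N /\ r i = (p i)%:R / Q%:R.
Proof.
move=> Q0 den_dvd r01.
have /choice[p hp] i : exists p : nat, (0 < p < Q)%N /\ r i = p%:R / Q%:R.
  by have [p] := rat_unit_itv_fraction Q0 (den_dvd i) (r01 i); exists p.
by exists p.
Qed.

Theorem proposition2p4 (R : realType) (k : nat) (x y : 'I_k -> rat)
  (hx : forall n, 0 < x n < 1) (hy : forall n, 0 < y n < 1)
  (hinj : forall m n, m != n -> x m != x n)
  (hmono : forall m n, x n <= x m -> y n <= y m) :
  exists (N : nat) (B : 'I_N -> bool),
    is_binary_digit_vector B /\
    (exists mu : probability R R, self_similar B mu) /\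
    (forall mu : probability R R, self_similar B mu ->
       forall n, cdfB mu (ratr (x n)) = (ratr (y n) : R)%:E).
Proof.
have [Q Q_ge2 Q_den] := exists_common_denominator
  (fun i : 'I_k + 'I_k => match i with inl n => x n | inr n => y n end).
have Q_gt0 : (0 < Q)%N := ltnW Q_ge2.
have [p hp] := rat_unit_itv_fractions x Q_gt0 (fun n => Q_den (inl n)) hx.
have [q hq] := rat_unit_itv_fractions y Q_gt0 (fun n => Q_den (inr n)) hy.
have pq_mono m n : (p m <= p n -> q m <= q n)%N.
  have Qinv : 0 < Q%:R^-1 :> rat by rewrite invr_gt0 ltr0n.
  rewrite -(ler_nat rat) -(ler_pM2r Qinv) -(hp m).2 -(hp n).2 => /hmono.
  by rewrite (hq m).2 (hq n).2 ler_pM2r // ler_nat.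
have [B [BW B_counts]] := exists_digit_vector_with_counts (fun n => (hp n).1)
  (fun n => ltnW (proj2 (andP (hq n).1))) pq_mono.
have W_ge2 : (2 <= digit_weight B)%N by rewrite BW.
exists (Q * Q)%N, B; split.
  by rewrite /is_binary_digit_vector BW; apply/and3P; split=> //; nia.
split; first by exists (digit_measure B (ltnW W_ge2)); exact: self_similar_digit_measure.
move=> mu mu_ss n; rewrite (hp n).2 (hq n).2 !fmorph_div !rmorph_nat.
have -> : (p n)%:R / Q%:R = (p n * Q)%N%:R / (Q * Q)%N%:R :> R.
  by rewrite !natrM -mulf_div divff ?mulr1 // pnatr_eq0 -lt0n.
by rewrite (self_similar_cdf_grid W_ge2 mu_ss) B_counts BW.
Qed.
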